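(* Let $N\ge1$, $\tilde s\in(0,1)$ and $$\tilde m\in\Big(\frac{N-2+4\tilde s}{N+2\tilde s},\ \frac{N+2\tilde s}{N+2}\Big).$$ Then there is a constant $K=K(N,\tilde s,\tilde m)>0$ such that $$v(x,t)=K\,t^{\frac{1}{1-\tilde m}}\,|x|^{-\frac{2-2\tilde s}{1-\tilde m}},\qquad x\neq 0,\ t>0,$$ is a solution of $$v_t=\nabla\cdot\big(v^{\tilde m-1}\nabla(-\Delta)^{-\tilde s}v\big).$$
   Context: For $0<\sigma<1$, $(-\Delta)^{-\sigma}$ is the inverse fractional Laplacian on $\mathbb{R}^N$ (Fourier symbol $(2\pi|\xi|)^{-2\sigma}$, Riesz potential). On power functions it acts by $$(-\Delta)^{-\sigma}|x|^{-\alpha}=\bar k(\alpha)\,|x|^{-\alpha+2\sigma},$$ where $$\bar k(\alpha)=2^{-2\sigma}\frac{\Gamma\big(\frac{N-\alpha}{2}\big)\,\Gamma\big(\frac{\alpha-2\sigma}{2}\big)}{\Gamma\big(\frac{\alpha}{2}\big)\,\Gamma\big(\frac{N-\alpha+2\sigma}{2}\big)}.$$ This formula is used as the meaning of $(-\Delta)^{-\sigma}|x|^{-\alpha}$ whenever the Gamma factors are finite, including exponents $\alpha>N$. The equation is required to hold pointwise for $x\neq0$, $t>0$. *)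

From HB Require Import structures.
From mathcomp Require Import all_boot all_order all_algebra.
From mathcomp Require Import all_classical all_reals all_analysis.
Set Implicit Arguments. Unset Strict Implicit. Unset Printing Implicit Defensive.
Import Order.TTheory GRing.Theory Num.Theory.
Import numFieldNormedType.Exports.
Local Open Scope classical_set_scope.
Local Open Scope ring_scope.

Section Defs.
Variable R : realType.

Definition Euler_Gamma (z : R) : R :=
  Rintegral lebesgue_measure `[0, +oo[%classic
    (fun t : R => t `^ (z - 1) * expR (- t)).

Definition Gamma_finite (z : R) : Prop := forall n : nat, z <> - (n%:R).

(* Meromorphic continuation via the functional equation:
   Gamma z = Gamma (z + n) / (z (z+1) ... (z+n-1)) with n = |floor z| + 1,
   so that z + n > 0.  For z > 0 this agrees with Euler's integral. *)
Definition Gamma (z : R) : R :=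
  let n := (`|Num.floor z|%N).+1 in
  Euler_Gamma (z + n%:R) / \prod_(k < n) (z + k%:R).

Definition enorm (N : nat) (x : 'rV[R]_N) : R :=
  Num.sqrt (\sum_(i < N) x ord0 i ^+ 2).

Definition kbar (N : nat) (sigma alpha : R) : R :=
  2 `^ (- (2 * sigma)) *
  (Gamma ((N%:R - alpha) / 2) * Gamma ((alpha - 2 * sigma) / 2)) /
  (Gamma (alpha / 2) * Gamma ((N%:R - alpha + 2 * sigma) / 2)).

Definition kbar_defined (N : nat) (sigma alpha : R) : Prop :=
  [/\ Gamma_finite ((N%:R - alpha) / 2), Gamma_finite ((alpha - 2 * sigma) / 2),
      Gamma_finite (alpha / 2) & Gamma_finite ((N%:R - alpha + 2 * sigma) / 2)].

Definition power_repr (N : nat) (sigma : R) (f : 'rV[R]_N -> R) (p : R * R) : Prop :=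
  kbar_defined N sigma p.2 /\
  forall y : 'rV[R]_N, y != 0 -> f y = p.1 * enorm y `^ (- p.2).

(* The inverse fractional Laplacian (-Delta)^(-sigma), with its meaning on
   (multiples of) power functions given by
   (-Delta)^(-sigma) |x|^(-alpha) = kbar(alpha) |x|^(-alpha + 2 sigma).
   (Default value 0 when f is not of that form; not used below.) *)
Definition inv_frac_lap (N : nat) (sigma : R) (f : 'rV[R]_N -> R) : 'rV[R]_N -> R :=
  let p := xget (0, 0) [set p | power_repr sigma f p] in
  fun x => p.1 * kbar N sigma p.2 * enorm x `^ (- p.2 + 2 * sigma).

Definition evec (N : nat) (i : 'I_N) : 'rV[R]_N := delta_mx ord0 i.

Definition solves_at (N : nat) (s m : R) (v : 'rV[R]_N -> R -> R)
  (x : 'rV[R]_N) (t : R) : Prop :=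
  let u := inv_frac_lap s (fun y => v y t) in
  let flux := fun (i : 'I_N) (y : 'rV[R]_N) => v y t `^ (m - 1) * 'D_(evec i) u y in
  [/\ derivable (v x) t 1,
      (forall i (y : 'rV[R]_N), y != 0 -> derivable u y (evec i)),
      (forall i, derivable (flux i) x (evec i)) &
      'D_1 (v x) t = \sum_(i < N) 'D_(evec i) (flux i) x].

End Defs.

From HB Require Import structures.
From mathcomp Require Import all_boot all_order all_algebra.
From mathcomp Require Import all_classical all_reals all_analysis.
From mathcomp Require Import ring lra measurable_realfun exponential_distribution.
Import Order.TTheory GRing.Theory Num.Theory.
Import numFieldNormedType.Exports.
Local Open Scope ring_scope.
Set Implicit Arguments. Unset Strict Implicit. Unset Printing Implicit Defensive.

(* The profile v = K t^a |x|^(-b), with a = 1/(1-m) and b = (2-2s)/(1-m),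
   separates variables.  By the power rule for the Riesz potential,
   (-Delta)^(-s) v = K t^a kbar(b) |x|^(2s-b), so the flux
   v^(m-1) grad (-Delta)^(-s) v is a constant multiple of |x|^(-b) x, whose
   divergence is (N-b) |x|^(-b).  Both sides of the equation are then multiples
   of t^(a-1) |x|^(-b), and they agree iff K^(1-m) = kbar(b) (b-2s) (b-N) / a.
   The window for m is exactly N + 2s < b < N + 2: there (N-b)/2 and
   (N-b+2s)/2 lie in (-1, 0) while the other Gamma arguments are positive, so
   kbar(b) > 0 and such a K > 0 exists. *)

Section LineDerivative.
Variables (R : numFieldType) (V W : normedModType R).

Lemma is_derive_lineP (f : V -> W) (x v : V) (d : W) :
  is_derive x v f d <-> is_derive (0 : R) 1 (fun h : R => f (h *: v + x)) d.
Proof.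
have DE : 'D_v f x = 'D_1 (fun h : R => f (h *: v + x)) 0.
  rewrite /derive; set g1 := fun h => h^-1 *: _; set g2 := fun h => h^-1 *: _.
  suff -> : g1 = g2 by [].
  by rewrite funeqE /g1 /g2 => h /=; rewrite addr0 scale0r add0r [_%:A]mulr1.
split=> -[df Df]; split.
- exact: (derivable1P f x v).1 df.
- by rewrite -DE.
- exact/derivable1P.
- by rewrite DE.
Qed.

End LineDerivative.

Section EuclideanNorm.
Variables (R : realType) (N : nat).
Implicit Types (x y : 'rV[R]_N) (i : 'I_N).
Local Notation e_ i := (evec R i).

Definition enorm2 y : R := \sum_(j < N) y ord0 j ^+ 2.

Lemma enorm2_ge0 y : 0 <= enorm2 y.
Proof. by apply: sumr_ge0 => j _; exact: sqr_ge0. Qed.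

Lemma enorm2_gt0 y : y != 0 -> 0 < enorm2 y.
Proof.
move=> y0; rewrite lt_def enorm2_ge0 andbT; apply/negP => /eqP.
move/eqP; rewrite psumr_eq0 => [/allP yj0|j _]; last exact: sqr_ge0.
move/eqP: y0; apply; apply/matrixP => a j; rewrite mxE (ord1 a).
by have := yj0 j (mem_index_enum _); rewrite sqrf_eq0 => /eqP.
Qed.

Lemma enorm_gt0 y : y != 0 -> 0 < enorm y.
Proof. by move=> y0; rewrite /enorm sqrtr_gt0 enorm2_gt0. Qed.

Lemma enorm0 : enorm (0 : 'rV[R]_N) = 0.
Proof.
rewrite /enorm; under eq_bigr do rewrite mxE expr0n /=.
by rewrite big1_eq sqrtr0.
Qed.

Lemma powR_enorm y p : enorm y `^ p = enorm2 y `^ (2^-1 * p).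
Proof. by rewrite /enorm powRrM powR12_sqrt // enorm2_ge0. Qed.

Lemma enorm2E y : enorm2 y = enorm y `^ 2.
Proof. by rewrite powR_enorm mulVf ?powRr1 ?enorm2_ge0. Qed.

Lemma enorm2_line i x h :
  enorm2 (h *: e_ i + x) = enorm2 x - x ord0 i ^+ 2 + (h + x ord0 i) ^+ 2.
Proof.
rewrite /enorm2 (bigD1 i) //= [in RHS](bigD1 i) //= !mxE /= eqxx mulr1.
rewrite (eq_bigr (fun j => x ord0 j ^+ 2)) => [|j ji]; last first.
  by rewrite !mxE /= (negbTE ji) mulr0 add0r.
by rewrite [x ord0 i ^+ 2 + _]addrC addrK addrC.
Qed.

Lemma enorm_scale_evec i h : enorm (h *: e_ i) = `|h|.
Proof.
rewrite /enorm -/(enorm2 _) -[h *: _]addr0 enorm2_line.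
rewrite /enorm2 big1 => [|k _]; last by rewrite mxE expr0n.
by rewrite !mxE expr0n /= subr0 add0r addr0 sqrtr_sqr.
Qed.

Lemma evec_eq0 i (h : R) : (h *: e_ i == 0) = (h == 0).
Proof.
apply/eqP/eqP => [/matrixP /(_ ord0 i)|->]; last by rewrite scale0r.
by rewrite !mxE /= eqxx mulr1.
Qed.

Lemma is_derive_enorm2 i x : is_derive x (e_ i) enorm2 (2 * x ord0 i).
Proof.
apply/is_derive_lineP.
have -> : (fun h : R => enorm2 (h *: e_ i + x)) =
    horner ((enorm2 x - x ord0 i ^+ 2)%:P + ('X + (x ord0 i)%:P) ^+ 2).
  by apply/funext => h; rewrite enorm2_line !hornerE.
apply: is_derive_eq.
rewrite derivD derivC add0r deriv_exp derivD derivX derivC addr0 mul1r /=.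
by rewrite !hornerE /= addr0 mulr_natl mulr2n.
Qed.

Lemma is_derive_coord i x : is_derive x (e_ i) (fun y => y ord0 i) 1.
Proof.
apply/is_derive_lineP.
have -> : (fun h : R => (h *: e_ i + x) ord0 i) = horner ('X + (x ord0 i)%:P).
  by apply/funext => h; rewrite !hornerE !mxE /= eqxx mulr1.
by apply: is_derive_eq; rewrite derivD derivX derivC addr0 hornerE.
Qed.

Lemma is_derive_powR_enorm (r : R) i x : x != 0 ->
  is_derive x (e_ i) (fun y => enorm y `^ r) (r * enorm x `^ (r - 2) * x ord0 i).
Proof.
move=> x0; apply/is_derive_lineP.
have -> : (fun h : R => enorm (h *: e_ i + x) `^ r) =
    (@powR R ^~ (2^-1 * r)) \o (fun h => enorm2 (h *: e_ i + x)).
  by apply/funext => h; rewrite /= powR_enorm.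
have dpow : is_derive ((fun h : R => enorm2 (h *: e_ i + x)) 0) 1
    (@powR R ^~ (2^-1 * r)) ((2^-1 * r) * enorm2 x `^ (2^-1 * r - 1)).
  by rewrite /= scale0r add0r; apply: is_derive1_powR; exact: enorm2_gt0.
have dline : is_derive (0 : R) 1 (fun h => enorm2 (h *: e_ i + x)) (2 * x ord0 i).
  exact: (is_derive_lineP enorm2 x (e_ i) _).1 (is_derive_enorm2 i x).
apply: is_derive_eq (is_derive1_comp dpow dline) _.
rewrite powR_enorm.
have -> : 2^-1 * (r - 2) = 2^-1 * r - 1 :> R by field.
by field.
Qed.

Lemma is_derive_powR_enormZ (C r : R) i x : x != 0 ->
  is_derive x (e_ i) (fun y => C * enorm y `^ r)
    (C * (r * enorm x `^ (r - 2) * x ord0 i)).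
Proof.
move=> x0; rewrite -[fun y => _]/(C \*: (fun y => enorm y `^ r)).
exact: is_deriveZ (is_derive_powR_enorm r i x0).
Qed.

Lemma is_derive_radial_field (C p : R) i x : x != 0 ->
  is_derive x (e_ i) (fun y => C * enorm y `^ p * y ord0 i)
    (C * (p * enorm x `^ (p - 2) * x ord0 i ^+ 2 + enorm x `^ p)).
Proof.
move=> x0.
have -> : (fun y => C * enorm y `^ p * y ord0 i) =
    (C \*: (fun y => enorm y `^ p)) * (fun y : 'rV[R]_N => y ord0 i).
  by apply/funext => y.
apply: is_derive_eq.
  exact: is_deriveM (is_derive_powR_enormZ C p i x0) (is_derive_coord i x).
rewrite /GRing.scale /= mulr1; ring.
Qed.

Lemma divergence_radial_field (C p : R) x : x != 0 ->
  \sum_(i < N) 'D_(e_ i) (fun y => C * enorm y `^ p * y ord0 i) x =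
  C * (p + N%:R) * enorm x `^ p.
Proof.
move=> x0; have nx := enorm_gt0 x0.
under eq_bigr => i _ do
  rewrite (@derive_val _ _ _ _ _ _ _ (is_derive_radial_field C p i x0)).
rewrite -mulr_sumr big_split /= sumr_const card_ord -mulr_sumr.
rewrite -[\sum_(i < N) _]/(enorm2 x) enorm2E -mulrA -powRD ?subrK; last first.
  by rewrite (gt_eqF nx) implybT.
by rewrite -[_ *+ N]mulr_natr; ring.
Qed.

End EuclideanNorm.

Lemma inv_frac_lap_powR (R : realType) (N : nat) (s P b : R) :
  (0 < N)%N -> P != 0 -> kbar_defined N s b ->
  inv_frac_lap s (fun y : 'rV[R]_N => P * enorm y `^ (- b)) =
  fun y => P * kbar N s b * enorm y `^ (- b + 2 * s).
Proof.
move=> N0 P0 kb; rewrite /inv_frac_lap (@xget_unique _ _ _ (P, b)) //.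
(* Any representation (P', b') agrees with (P, b) at e and 2 e, which pins it down. *)
move=> [P' b'] [_ /= repr'].
have at_e (h : R) : 0 < h -> P * h `^ (- b) = P' * h `^ (- b').
  move=> h0; rewrite -(gtr0_norm h0) -(enorm_scale_evec (Ordinal N0) h).
  by rewrite repr' // evec_eq0 gt_eqF.
have P'E : P' = P by have := at_e 1 ltr01; rewrite !powR1 !mulr1.
subst P'.
move: at_e => /(_ 2 (ltr0Sn R 1))/(mulfI P0)/(congr1 (@ln R)).
rewrite !ln_powR => /(mulIf (lt0r_neq0 (ln_gt0 (ltr1n R 2)))) /eqP.
by rewrite eqr_opp => /eqP ->.
Qed.

Section GammaSign.
Local Open Scope classical_set_scope.
Variable R : realType.
Notation mu := (@lebesgue_measure R).
Implicit Types (t w : R).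

Definition Euler_integrand w t : R := t `^ (w - 1) * expR (- t).

Lemma ln_le_tangent (k t : R) : 0 < k -> 0 < t -> ln t <= ln k + t / k - 1.
Proof.
move=> k0 t0; have tk0 : 0 < t / k by rewrite divr_gt0.
rewrite -{1}(divfK (lt0r_neq0 k0) t) lnM ?posrE // addrC -addrA lerD2l.
by have := @le_ln1Dx R (t / k - 1); rewrite addrCA subrr addr0; apply; lra.
Qed.

(* Domination by a multiple of the Exp(1/2) density. *)
Lemma Euler_integrand_le w t : 1 <= w -> 0 <= t ->
  Euler_integrand w t <=
  (expR ((w - 1) * (ln (2 * w) - 1)) + 1) * expR (- (t / 2)).
Proof.
move=> w1; rewrite /Euler_integrand le0r => /orP[/eqP ->|t0].
  rewrite oppr0 mul0r oppr0 expR0 !mulr1 /powR eqxx.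
  have e0 := expR_gt0 ((w - 1) * (ln (2 * w) - 1)).
  by case: (_ == _) => /=; lra.
rewrite /powR (gt_eqF t0) -expRD.
apply: (@le_trans _ _ (expR ((w - 1) * (ln (2 * w) - 1)) * expR (- (t / 2)))).
  rewrite -expRD ler_expR.
  have w0 : 0 < 2 * w by lra.
  have wln : (w - 1) * ln t <= (w - 1) * (ln (2 * w) + t / (2 * w) - 1).
    by rewrite ler_wpM2l ?subr_ge0 // ln_le_tangent.
  have wt : (w - 1) * (t / (2 * w)) <= t / 2.
    rewrite mulrA ler_pdivrMr // mulrC.
    have -> : t / 2 * (2 * w) = t * w by field.
    nra.
  have E : (w - 1) * (ln (2 * w) + t / (2 * w) - 1) =
    (w - 1) * (ln (2 * w) - 1) + (w - 1) * (t / (2 * w)) by ring.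
  lra.
by rewrite ler_wpM2r ?lerDl // ltW // expR_gt0.
Qed.

Let Rplus := `[0, +oo[%classic : set R.

Lemma measurable_Euler_integrand w :
  measurable_fun Rplus (fun t => (Euler_integrand w t)%:E).
Proof.
apply/measurable_EFinP/measurable_funM.
  exact: measurable_funTS (@measurable_powR R (w - 1)).
apply/measurable_funTS/(measurableT_comp (@measurable_expR R)).
exact: oppr_measurable.
Qed.

Lemma Euler_integrand_ge0 w t : (0 <= (Euler_integrand w t)%:E)%E.
Proof. by rewrite lee_fin mulr_ge0 ?powR_ge0 // ltW // expR_gt0. Qed.

Lemma Euler_integral_lt_pinfty w : 1 <= w ->
  (\int[mu]_(t in Rplus) (Euler_integrand w t)%:E < +oo)%E.
Proof.
move=> w1; pose C := expR ((w - 1) * (ln (2 * w) - 1)) + 1.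
have C0 : 0 <= C by rewrite addr_ge0 // ltW // expR_gt0.
pose pdf := @exponential_pdf R 2^-1.
have mRplus : measurable Rplus by exact: measurable_itv.
have pdf0 x : (0 <= (pdf x)%:E)%E by rewrite lee_fin exponential_pdf_ge0.
have mpdf : measurable_fun setT (fun x => (pdf x)%:E).
  by apply/measurable_EFinP; exact: measurable_exponential_pdf.
apply: (@le_lt_trans _ _ (\int[mu]_(t in Rplus) ((2 * C)%:E * (pdf t)%:E))%E).
  apply: ge0_le_integral => //.
  - by move=> t _; exact: Euler_integrand_ge0.
  - exact: measurable_Euler_integrand.
  - apply/measurable_EFinP/measurable_funM => //.
    exact/measurable_EFinP/measurable_funTS.
  move=> t; rewrite /Rplus /= in_itv /= andbT => t0.
  rewrite -EFinM lee_fin /pdf exponential_pdfE //.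
  have -> : 2 * C * (2^-1 * expR (- 2^-1 * t)) = C * expR (- (t / 2)).
    by rewrite mulNr (mulrC 2^-1 t); field.
  exact: Euler_integrand_le.
rewrite ge0_integralZl_EFin ?mulr_ge0 //; last exact: measurable_funTS mpdf.
apply: (@le_lt_trans _ _ (2 * C)%:E); last by rewrite ltry.
rewrite -[leRHS]mule1; apply: lee_wpmul2l; first by rewrite lee_fin mulr_ge0.
rewrite -(@integral_exponential_pdf R 2^-1) ?invr_gt0 //.
exact: ge0_subset_integral.
Qed.

Lemma Euler_integral_ge w : 1 <= w ->
  ((expR (-2))%:E <= \int[mu]_(t in Rplus) (Euler_integrand w t)%:E)%E.
Proof.
move=> w1; pose I12 := `[1, 2]%classic : set R.
have m12 : measurable I12 by exact: measurable_itv.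
have sub12 : I12 `<=` Rplus.
  by move=> x; rewrite /I12 /Rplus /= !in_itv /= andbT => /andP[/(le_trans ler01)].
apply: (le_trans _ (ge0_subset_integral mu m12 (measurable_itv _)
  (measurable_Euler_integrand w) (fun t _ => Euler_integrand_ge0 w t) sub12)).
have mu12 : mu I12 = 1%E.
  by rewrite lebesgue_measure_itv /= lte_fin ltr1n -EFinD; congr (_%:E); lra.
rewrite -[leLHS]mule1 -mu12 -integral_cst //.
apply: ge0_le_integral => //.
- by move=> t _; rewrite lee_fin ltW // expR_gt0.
- exact: measurable_funS (measurable_itv _) sub12 (measurable_Euler_integrand w).
move=> t; rewrite /I12 /= !in_itv /= => /andP[t1 t2].
rewrite lee_fin -[leLHS]mul1r; apply: ler_pM => //.
  by rewrite -[leLHS](powRr0 t) ler_powR // subr_ge0.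
by rewrite ler_expR lerN2.
Qed.

Lemma Euler_Gamma_gt0 w : 1 <= w -> 0 < Euler_Gamma w.
Proof.
move=> w1; apply/fine_gt0/andP; split; last exact: Euler_integral_lt_pinfty.
by apply: lt_le_trans (Euler_integral_ge w1); rewrite lte_fin expR_gt0.
Qed.

End GammaSign.

Section KbarSign.
Variable R : realType.
Implicit Types z : R.

Lemma Gamma_gt0 z : 0 < z -> 0 < Gamma z.
Proof.
move=> z0; rewrite /Gamma; set n := (`|Num.floor z|%N).+1.
apply: divr_gt0; last by apply: prodr_gt0 => k _; exact: ltr_wpDr.
apply: Euler_Gamma_gt0; have : 1 <= n%:R :> R by rewrite ler1n.
lra.
Qed.

Lemma Gamma_lt0 z : -1 < z < 0 -> Gamma z < 0.
Proof.
move=> /andP[z1 z0]; rewrite /Gamma.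
have -> : Num.floor z = -1 by apply: floor_def; rewrite /= z0 andbT ltW.
rewrite /= !big_ord_recl big_ord0 /= mulr1 addr0 /bump /= add1n.
have EG : 0 < Euler_Gamma (z + 2) by apply: Euler_Gamma_gt0; lra.
have P : 0 < - (z * (z + 1%:R)) by rewrite -mulNr mulr_gt0 //; lra.
by rewrite -oppr_gt0 -mulrN -invrN divr_gt0.
Qed.

Lemma Gamma_finite_gt0 z : 0 < z -> Gamma_finite z.
Proof. by move=> z0 n zn; move: z0; rewrite zn oppr_gt0 ltNge ler0n. Qed.

Lemma Gamma_finite_neg1 z : -1 < z < 0 -> Gamma_finite z.
Proof.
move=> /andP[z1 z0] [|n] zn; first by move: z0; rewrite zn oppr0 ltxx.
have : 1 <= n.+1%:R :> R by rewrite ler1n.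
lra.
Qed.

Variables (N : nat) (s b : R).
Hypotheses (s01 : 0 < s < 1) (b_window : N%:R + 2 * s < b < N%:R + 2).

Let window_facts : [/\ 0 < s, s < 1, N%:R + 2 * s < b, b < N%:R + 2 & 0 <= N%:R :> R].
Proof. by case/andP: s01 => ? ?; case/andP: b_window => ? ?; split. Qed.

Let arg1 : -1 < (N%:R - b) / 2 < 0.
Proof. by case: window_facts => *; apply/andP; split; lra. Qed.
Let arg2 : 0 < (b - 2 * s) / 2.
Proof. by case: window_facts => *; lra. Qed.
Let arg3 : 0 < b / 2.
Proof. by case: window_facts => *; lra. Qed.
Let arg4 : -1 < (N%:R - b + 2 * s) / 2 < 0.
Proof. by case: window_facts => *; apply/andP; split; lra. Qed.

Lemma kbar_defined_window : kbar_defined N s b.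
Proof.
by split; [exact: Gamma_finite_neg1 | exact: Gamma_finite_gt0
          | exact: Gamma_finite_gt0 | exact: Gamma_finite_neg1].
Qed.

(* Gamma ((N - b) / 2) and Gamma ((N - b + 2 s) / 2) are both negative. *)
Lemma kbar_gt0 : 0 < kbar N s b.
Proof.
rewrite /kbar -mulrA mulr_gt0 ?powR_gt0 // -mulrNN -invrN divr_gt0 //.
  by rewrite -mulNr mulr_gt0 ?oppr_gt0 ?Gamma_lt0 ?Gamma_gt0.
by rewrite -mulrN mulr_gt0 ?oppr_gt0 ?Gamma_lt0 ?Gamma_gt0.
Qed.

End KbarSign.

Section SeparableSolution.
Variables (R : realType) (N : nat) (s m a b K : R).
Hypotheses (N_gt0 : (0 < N)%N) (K_gt0 : 0 < K) (b_neq0 : b != 0).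
Hypotheses (kb : kbar_defined N s b) (a_m : a * (1 - m) = 1).
Hypothesis b_m : b * (1 - m) = 2 - 2 * s.
Hypothesis balance : a * K = K `^ m * kbar N s b * (b - 2 * s) * (b - N%:R).

Local Notation e_ i := (evec R i).
Let v (x : 'rV[R]_N) (t : R) := K * t `^ a * enorm x `^ (- b).
Let P (t : R) := K * t `^ a.
Let c := kbar N s b.

Let P_gt0 t : 0 < t -> 0 < P t.
Proof. by move=> t0; rewrite mulr_gt0 ?powR_gt0. Qed.

Lemma inv_frac_lap_profile t : 0 < t ->
  inv_frac_lap s (v ^~ t) = fun y => P t * c * enorm y `^ (- b + 2 * s).
Proof. move=> t0; exact (inv_frac_lap_powR N_gt0 (lt0r_neq0 (P_gt0 t0)) kb). Qed.

Lemma flux_profile t i : 0 < t ->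
  (fun y => v y t `^ (m - 1) *
     'D_(e_ i) (fun y => P t * c * enorm y `^ (- b + 2 * s)) y) =
  fun y => P t `^ (m - 1) * (P t * c * (- b + 2 * s)) * enorm y `^ (- b) * y ord0 i.
Proof.
move=> t0; have m1 : m - 1 != 0.
  by apply: contra_eqN a_m => /eqP m1; rewrite -opprB m1 oppr0 mulr0 eq_sym oner_eq0.
(* At y = 0 the derivative is a junk value, but the factor 0 `^ (m - 1) is 0. *)
apply/funext => y; have [->|y0] := eqVneq y 0.
  by rewrite /v enorm0 !powR0 ?oppr_eq0 // mulr0 powR0 // mxE !mulr0 mul0r.
rewrite (@derive_val _ _ _ _ _ _ _ (is_derive_powR_enormZ _ _ i y0)).
rewrite /v -/(P t) powRM ?(ltW (P_gt0 t0)) ?powR_ge0 // -powRrM.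
have -> : enorm y `^ (- b) = enorm y `^ (- b * (m - 1)) * enorm y `^ (- b + 2 * s - 2).
  rewrite -powRD; last by rewrite (gt_eqF (enorm_gt0 y0)) implybT.
  have -> : 2 * s = 2 - b * (1 - m) by rewrite b_m; ring.
  by congr (_ `^ _); ring.
ring.
Qed.

Lemma is_derive_profile_time (x : 'rV[R]_N) (t : R) : 0 < t ->
  is_derive t 1 (v x) (K * enorm x `^ (- b) * (a * t `^ (a - 1))).
Proof.
move=> t0; have -> : v x = (K * enorm x `^ (- b)) \*: (@powR R ^~ a).
  by apply/funext => t'; rewrite /v mulrAC.
exact: is_deriveZ (is_derive1_powR a t0).
Qed.

Lemma solves_at_profile (x : 'rV[R]_N) (t : R) :
  x != 0 -> 0 < t -> solves_at s m v x t.
Proof.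
move=> x0 t0; rewrite /solves_at /= inv_frac_lap_profile //.
have dflux i := is_derive_radial_field
  (P t `^ (m - 1) * (P t * c * (- b + 2 * s))) (- b) i x0.
split.
- by case: (is_derive_profile_time x t0).
- by move=> i y y0; case: (is_derive_powR_enormZ (P t * c) (- b + 2 * s) i y0).
- by move=> i; rewrite flux_profile //; case: dflux.
under eq_bigr => i _ do rewrite flux_profile //.
rewrite divergence_radial_field //.
rewrite (@derive_val _ _ _ _ _ _ _ (is_derive_profile_time x t0)).
have Pm : P t `^ (m - 1) * P t = K `^ m * t `^ (a - 1).
  have P0 := ltW (P_gt0 t0).
  rewrite -{2}(powRr1 P0) -powRD ?subrK; last by rewrite (gt_eqF (P_gt0 t0)) implybT.
  rewrite powRM ?powR_ge0 ?(ltW K_gt0) // -powRrM.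
  by congr (_ * t `^ _); transitivity (a - a * (1 - m)); [ring | rewrite a_m].
transitivity (a * K * t `^ (a - 1) * enorm x `^ (- b)); first by ring.
rewrite balance -/c; transitivity ((P t `^ (m - 1) * P t) * c * (- b + 2 * s) *
  (- b + N%:R) * enorm x `^ (- b)); last by ring.
rewrite Pm; ring.
Qed.

End SeparableSolution.

Lemma profile_exponent_window (R : realType) (N : nat) (s m : R) :
  0 < s < 1 ->
  (N%:R - 2 + 4 * s) / (N%:R + 2 * s) < m < (N%:R + 2 * s) / (N%:R + 2) ->
  0 < 1 - m /\ N%:R + 2 * s < (2 - 2 * s) / (1 - m) < N%:R + 2.
Proof.
move=> /andP[s0 s1] /andP[mlo mhi]; have N0 := ler0n R N.
rewrite ltr_pdivrMr in mlo; last lra.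
rewrite ltr_pdivlMr in mhi; last lra.
have m1 : 0 < 1 - m by nra.
by split; rewrite // ltr_pdivlMr // ltr_pdivrMr //; apply/andP; split; nra.
Qed.

Lemma powR_inv_exponent (R : realType) (Z a m : R) :
  0 < Z -> a * (1 - m) = 1 -> a * Z `^ a = (Z `^ a) `^ m * (a * Z).
Proof.
move=> Z0 a_m; transitivity (a * Z `^ (a * m + 1)).
  by congr (_ * Z `^ _); transitivity (a * m + a * (1 - m)); [ring | rewrite a_m].
rewrite powRD ?powRr1 -?powRrM ?(ltW Z0) ?(gt_eqF Z0) ?implybT //; ring.
Qed.

Unset Implicit Arguments.

Theorem theorem6p1 (R : realType) (N : nat) (s m : R) :
  (1 <= N)%N -> 0 < s < 1 ->
  (N%:R - 2 + 4 * s) / (N%:R + 2 * s) < m < (N%:R + 2 * s) / (N%:R + 2) ->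
  exists K : R, 0 < K /\
    let v := fun (x : 'rV[R]_N) (t : R) =>
      K * t `^ (1 / (1 - m)) * enorm x `^ (- ((2 - 2 * s) / (1 - m))) in
    forall (x : 'rV[R]_N) (t : R), x != 0 -> 0 < t -> solves_at s m v x t.
Proof.
move=> N1 s01 mwin; have [m1 bwin] := profile_exponent_window s01 mwin.
set a := 1 / (1 - m); set b := (2 - 2 * s) / (1 - m) in bwin *.
have a_m : a * (1 - m) = 1 by rewrite /a mul1r mulVf ?gt_eqF.
have b_m : b * (1 - m) = 2 - 2 * s by rewrite /b divfK ?gt_eqF.
have [s0 _] := andP s01; have [b_lo b_hi] := andP bwin; have N0 := ler0n R N.
have a0 : 0 < a by rewrite /a mul1r invr_gt0.
have c0 := kbar_gt0 s01 bwin; set c := kbar N s b in c0 *.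
set Z := c * (b - 2 * s) * (b - N%:R) / a.
have Z0 : 0 < Z.
  by apply: divr_gt0 (mulr_gt0 (mulr_gt0 c0 _) _) a0; rewrite subr_gt0; lra.
exists (Z `^ a); split; first exact: powR_gt0.
move=> v x t; apply: solves_at_profile => //.
- exact: powR_gt0.
- by rewrite gt_eqF //; lra.
- exact: kbar_defined_window s01 bwin.
have aZ : a * Z = c * (b - 2 * s) * (b - N%:R) by rewrite mulrC divfK ?gt_eqF.
by rewrite (powR_inv_exponent Z0 a_m) aZ -/c !mulrA.
Qed.
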